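(* If the diagonal gain matrix $\Theta=\texttt{diag}(\theta_1,\dots,\theta_n)$ is chosen large enough that $\theta_i > \zeta_{N_{d1},i} + \lambda_{3,i}^{-1} \zeta_{N_{d2},i}$ for every $i$, then $P(t) \geq 0$ for all $t \geq t_0$.
   Context: Consider a fully actuated multirotor with configuration $q=[p;\phi]\in\mathbb{R}^n$ ($n=6$; position $p$, Euler angles $\phi$) whose dynamics are written as $M(q)\ddot q = G(q)Av + h(q,\dot q) + d(t)$, where $M(q)=\texttt{blkdiag}(mI_3,Q^\top JQ)$ is symmetric, $G(q)=\texttt{blkdiag}(R,Q^\top)$, $A\in\mathbb{R}^{6\times 6}$ is the constant invertible rotor-thrust-to-wrench map, $v$ is the shifted rotor-thrust input with symmetric bound $-\overline v\le v\le \overline v$, and $d(t)$ is an external disturbance. For a vector $x$, $\operatorname{Tanh}(x)$ denotes the vector $[\tanh(x_1);\dots;\tanh(x_n)]$ and $\operatorname{Cosh}(x)$ denotes the diagonal matrix $\texttt{diag}(\cosh(x_1),\dots,\cosh(x_n))$. With desired trajectory $q_d(t)$, error variables are $e_1=q_d-q$, $e_2=\dot e_1+\Lambda_1\operatorname{Tanh}(e_1)+e_f$, $\dot e_f=-\Gamma_1 e_2+\operatorname{Tanh}(e_1)-\Gamma_2 e_f$, and the controller is $v=\Gamma_1\operatorname{Tanh}(z)$, $\dot z=\operatorname{Cosh}^2(z)\Gamma_1^{-1}A^{-1}G^{-1}\big(M\Gamma_1\{\Lambda_2\operatorname{Tanh}(e_2)+\Lambda_3 e_2+\Gamma_2 e_2\}+\Theta\operatorname{sgn}(e_2)-\dot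 G A v\big)$, with all of $\Lambda_1,\Lambda_2,\Lambda_3,\Gamma_1,\Gamma_2,\Theta$ positive definite diagonal gain matrices ($\lambda_{3,i}$ denotes the $i$-th diagonal entry of $\Lambda_3$). Define $r=\dot e_2+\Lambda_2\operatorname{Tanh}(e_2)+\Lambda_3 e_2$, $h_d=h(q_d,\dot q_d)$, and $N_d=\dot M\ddot q_d+M\dddot q_d-\dot h_d-\dot d$. It is assumed that $\zeta_{N_{d1},i}=\sup_t|N_{d,i}(t)|$ and $\zeta_{N_{d2},i}=\sup_t|\dot N_{d,i}(t)|$ exist (are finite) for each $i$. The function $P$ is defined by $\dot P=-r^\top(N_d-\Theta\operatorname{sgn}(e_2))$ with initial value $P(t_0)=\sum_{i=1}^n\theta_i|e_{2i}(t_0)|-e_2(t_0)^\top N_d(t_0)$. *)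

From HB Require Import structures.
From mathcomp Require Import all_boot all_order all_algebra.
From mathcomp Require Import all_classical all_reals all_analysis.
Set Implicit Arguments. Unset Strict Implicit. Unset Printing Implicit Defensive.
Import Order.TTheory GRing.Theory Num.Theory.
Import numFieldNormedType.Exports.
Local Open Scope classical_set_scope.
Local Open Scope ring_scope.

Definition tanh {R : realType} (x : R) : R :=
  (expR x - expR (- x)) / (expR x + expR (- x)).

(* dimension of the configuration space q = [p; phi] *)
Definition nq : nat := 6.

Definition zeta_Nd1 {R : realType} (Nd : 'I_nq -> R -> R) (i : 'I_nq) : R :=
  sup (range (fun t : R => `|Nd i t|)).
Definition zeta_Nd2 {R : realType} (Nd : 'I_nq -> R -> R) (i : 'I_nq) : R :=
  sup (range (fun t : R => `|derive1 (Nd i) t|)).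

Definition r_sig {R : realType} (lam2 lam3 : 'I_nq -> R) (e2 : 'I_nq -> R -> R)
  (i : 'I_nq) (t : R) : R :=
  derive1 (e2 i) t + lam2 i * tanh (e2 i t) + lam3 i * e2 i t.

Definition P_integrand {R : realType} (lam2 lam3 theta : 'I_nq -> R)
  (e2 Nd : 'I_nq -> R -> R) (t : R) : R :=
  \sum_(i < nq) r_sig lam2 lam3 e2 i t * (Nd i t - theta i * Num.sg (e2 i t)).

Definition P_init {R : realType} (theta : 'I_nq -> R) (e2 Nd : 'I_nq -> R -> R)
  (t0 : R) : R :=
  \sum_(i < nq) theta i * `|e2 i t0| - \sum_(i < nq) e2 i t0 * Nd i t0.

(* P is the solution of dP/dt = - r^T (N_d - Theta sgn(e2)), P(t0) = P_init,
   i.e. P(t) = P(t0) - int_{t0}^t r^T (N_d - Theta sgn(e2)) ds  (Lebesgue integral) *)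
Definition P_fun {R : realType} (lam2 lam3 theta : 'I_nq -> R)
  (e2 Nd : 'I_nq -> R -> R) (t0 t : R) : R :=
  P_init theta e2 Nd t0
  - Rintegral lebesgue_measure `[t0, t]%classic (P_integrand lam2 lam3 theta e2 Nd).

From HB Require Import structures.
From mathcomp Require Import all_boot all_order all_algebra.
From mathcomp Require Import all_classical all_reals all_analysis.
From mathcomp Require Import ring lra measurable_realfun.
Import Order.TTheory GRing.Theory Num.Theory.
Import numFieldNormedType.Exports.
Local Open Scope classical_set_scope.
Local Open Scope ring_scope.

(* Coordinatewise, put V_i(s) = theta_i |e2_i(s)| - e2_i(s) Nd_i(s), which is
   nonnegative because |Nd_i| <= theta_i; then P(t) is the sum over i of
   V_i(t0) minus the integral of r_i (Nd_i - theta_i sgn e2_i).  Writing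
   r_i = e2_i' + lam2_i tanh e2_i + lam3_i e2_i, the term e2_i' sgn e2_i
   integrates to |e2_i(t)| - |e2_i(t0)|, and the gain condition
   lam3_i |Nd_i| + |Nd_i'| <= lam3_i theta_i makes the remaining integrand
   pointwise at most (e2_i Nd_i)'.  Hence the i-th integral is at most
   V_i(t0) - V_i(t), and P(t) >= sum_i V_i(t) >= 0.  Since |e2_i| need not be
   differentiable, the identity for e2_i' sgn e2_i is obtained from the smooth
   approximations sqrt(e2_i^2 + 1/n^2) by dominated convergence. *)

Lemma derivable1_continuous {R : numFieldType} {V : normedModType R} {f : R -> V} :
  (forall x, derivable f x 1) -> continuous f.
Proof. by move=> df x; apply/differentiable_continuous/derivable1_diffP. Qed.

Section smooth_abs.
Context {R : realType}.

Definition smooth_abs (c y : R) : R := Num.sqrt (y ^+ 2 + c).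

Context {c : R} (c_gt0 : 0 < c).

Lemma smooth_abs_gt0 y : 0 < smooth_abs c y.
Proof. by rewrite sqrtr_gt0 ltr_wpDl ?sqr_ge0. Qed.

Lemma normr_div_smooth_abs_le1 y : `|y / smooth_abs c y| <= 1.
Proof.
rewrite normrM normfV (gtr0_norm (smooth_abs_gt0 y)) ler_pdivrMr ?smooth_abs_gt0 //.
by rewrite mul1r -sqrtr_sqr ler_sqrt ?lerDl ?ltW // ltr_wpDl ?sqr_ge0.
Qed.

Lemma continuous_smooth_abs : continuous (smooth_abs c).
Proof.
move=> y.
have sqr_add_c : {for y, continuous (fun z : R => z ^+ 2 + c)}.
  by apply: continuousD; [apply: continuousM | exact: cvg_cst].
exact: (continuous_comp sqr_add_c (@sqrt_continuous R _)).
Qed.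

Lemma is_derive_smooth_abs_comp {e : R -> R} {x : R} : derivable e x 1 ->
  is_derive x 1 (fun y => smooth_abs c (e y)) (derive1 e x * (e x / smooth_abs c (e x))).
Proof.
move=> de.
have e2c_gt0 : 0 < e x ^+ 2 + c by rewrite ltr_wpDl ?sqr_ge0.
have de2c : is_derive x 1 (fun y => e y ^+ 2 + c) ((2 * e x ^+ 1) *: derive1 e x + 0).
  have de2 : is_derive x 1 (e ^+ 2) ((2 * e x ^+ 1) *: derive1 e x).
    by apply: is_deriveX; rewrite derive1E; exact: derivableP.
  have dc : is_derive x 1 (cst c : R -> R) 0 by exact: is_derive_cst.
  exact: is_deriveD de2 dc.
have := @is_derive1_comp R Num.sqrt _ x _ _ (is_derive1_sqrt e2c_gt0) de2c.
move/(@is_derive_eq _ _ _ (fun y => smooth_abs c (e y))); apply.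
rewrite /smooth_abs addr0 expr1 /GRing.scale /= invfM.
have := smooth_abs_gt0 (e x); rewrite /smooth_abs => s_gt0.
by field; rewrite gt_eqF.
Qed.
End smooth_abs.

Section smooth_abs_harmonic.
Context {R : realType}.

Lemma smooth_abs_harmonic_cvg (y : R) :
  (fun n => smooth_abs (harmonic n ^+ 2) y) @ \oo --> `|y|.
Proof.
rewrite -sqrtr_sqr; apply: (continuous_cvg _ (@sqrt_continuous R _)).
rewrite -[X in _ --> X]addr0; apply: cvgD; first exact: cvg_cst.
by rewrite -[X in _ --> X](mulr0 (0 : R)); exact: cvgM cvg_harmonic cvg_harmonic.
Qed.

Lemma div_smooth_abs_harmonic_cvg (y : R) :
  (fun n => y / smooth_abs (harmonic n ^+ 2) y) @ \oo --> Num.sg y.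
Proof.
have [->|y_neq0] := eqVneq y 0.
  by rewrite sgr0; under eq_fun do rewrite mul0r; exact: cvg_cst.
have -> : Num.sg y = y / `|y| by rewrite {2}[y]numEsg mulfK ?normr_eq0.
apply: cvgM; first exact: cvg_cst.
by apply: cvgV; [rewrite normr_eq0 | exact: smooth_abs_harmonic_cvg].
Qed.

End smooth_abs_harmonic.

Section integral_derive_mul_sg.
Context {R : realType}.
Notation mu := (@lebesgue_measure R).
Variables (e : R -> R) (a b : R).
Hypotheses (ab : a < b) (de : forall x, derivable e x 1)
  (ce' : continuous (derive1 e)).

Let ce : continuous e := derivable1_continuous de.

Let continuous_smooth_abs_e c : continuous (fun x => smooth_abs c (e x)).
Proof. by move=> x; exact: (continuous_comp (ce x) (continuous_smooth_abs (e x))). Qed.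

Let smoothed c x := derive1 e x * (e x / smooth_abs c (e x)).

Let continuous_smoothed c : 0 < c -> continuous (smoothed c).
Proof.
move=> c_gt0 x; apply: continuousM; first exact: ce'.
apply: continuousM; first exact: ce.
apply: continuousV; first by rewrite gt_eqF ?smooth_abs_gt0.
exact: continuous_smooth_abs_e.
Qed.

Let integral_smoothed c : 0 < c ->
  (\int[mu]_(x in `[a, b]) (smoothed c x)%:E
   = (smooth_abs c (e b))%:E - (smooth_abs c (e a))%:E)%E.
Proof.
move=> c_gt0.
have cse := continuous_smooth_abs_e c.
apply: (@continuous_FTC2 R _ (fun y => smooth_abs c (e y))) => //.
- exact/continuous_subspaceT/continuous_smoothed.
- split.
  + by move=> x _; exact: (@ex_derive _ _ _ _ _ _ _ (is_derive_smooth_abs_comp c_gt0 (de x))).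
  + exact: cvg_at_right_filter (cse a).
  + exact: cvg_at_left_filter (cse b).
- move=> x _; rewrite derive1E.
  exact: (@derive_val _ _ _ _ _ _ _ (is_derive_smooth_abs_comp c_gt0 (de x))).
Qed.

Let harmonic_sqr_gt0 n : 0 < harmonic n ^+ 2 :> R.
Proof. by rewrite exprn_gt0 ?harmonic_gt0. Qed.

Let smoothed_cvg x :
  smoothed (harmonic n ^+ 2) x @[n --> \oo] --> derive1 e x * Num.sg (e x).
Proof. by apply: cvgM; [exact: cvg_cst | exact: div_smooth_abs_harmonic_cvg]. Qed.

Let measurable_smoothed n : measurable_fun `[a, b] (smoothed (harmonic n ^+ 2)).
Proof.
apply: measurable_funS (continuous_measurable_fun _) => //.
exact: continuous_smoothed.
Qed.

Lemma measurable_derive_mul_sg :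
  measurable_fun `[a, b] (fun x => derive1 e x * Num.sg (e x)).
Proof. exact: measurable_fun_cvg measurable_smoothed (fun x _ => smoothed_cvg x). Qed.

Let integrable_normr_derive :
  mu.-integrable `[a, b] (EFin \o (fun x => `|derive1 e x|)).
Proof.
apply: continuous_compact_integrable; first exact: segment_compact.
apply: continuous_subspaceT => x.
exact: (continuous_comp (ce' x) (@norm_continuous _ _ _)).
Qed.

Let normr_smoothed_le c x : 0 < c -> `|smoothed c x| <= `|derive1 e x|.
Proof.
move=> c_gt0; rewrite normrM -[leRHS]mulr1 ler_wpM2l //.
exact: normr_div_smooth_abs_le1.
Qed.

Lemma integrable_derive_mul_sg :
  mu.-integrable `[a, b] (EFin \o (fun x => derive1 e x * Num.sg (e x))).
Proof.
apply: le_integrable integrable_normr_derive => //.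
  by apply/measurable_EFinP; exact: measurable_derive_mul_sg.
move=> x _; rewrite /= lee_fin normr_id normrM -[leRHS]mulr1 ler_wpM2l //.
by rewrite normr_sg lern1 leq_b1.
Qed.

Lemma Rintegral_derive_mul_sg :
  \int[mu]_(x in `[a, b]) (derive1 e x * Num.sg (e x)) = `|e b| - `|e a|.
Proof.
pose f_ n x := (smoothed (harmonic n ^+ 2) x)%:E.
have mf_ n : measurable_fun `[a, b] (f_ n) by exact/measurable_EFinP.
pose f x := (derive1 e x * Num.sg (e x))%:E.
have mf : measurable_fun `[a, b] f.
  by apply/measurable_EFinP; exact: measurable_derive_mul_sg.
have f_f : {ae mu, forall x, `[a, b]%classic x -> f_ ^~ x @ \oo --> f x}.
  by apply: aeW => x _; apply: cvg_EFin; [exact: nearW | exact: smoothed_cvg].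
pose g x := (`|derive1 e x|)%:E.
have f_g : {ae mu, forall x n, `[a, b]%classic x -> (`|f_ n x| <= g x)%E}.
  by apply: aeW => x n _; rewrite abse_EFin lee_fin; exact: normr_smoothed_le.
have mD : measurable `[a, b] by exact: measurable_itv.
have [_ _ cvg_int] := @dominated_convergence _ _ _ mu _ mD f_ f g mf_ mf f_f
  integrable_normr_derive f_g.
have cvg_FTC : (fun n => \int[mu]_(x in `[a, b]) f_ n x)%E @ \oo
    --> (`|e b| - `|e a|)%:E.
  rewrite (funext (fun n => integral_smoothed _ (harmonic_sqr_gt0 n))).
  apply: cvg_EFin; first exact: nearW.
  by apply: cvgB; exact: smooth_abs_harmonic_cvg.
by rewrite /Rintegral (cvg_unique _ cvg_int cvg_FTC).
Qed.

End integral_derive_mul_sg.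

Lemma Rintegral_le_sub_of_le_derive {R : realType} (c Y : R -> R) (a b : R) :
  a <= b ->
  continuous c -> (forall x, derivable Y x 1) -> (forall x, c x <= derive1 Y x) ->
  \int[@lebesgue_measure R]_(x in `[a, b]) c x <= Y b - Y a.
Proof.
rewrite le_eqVlt => /predU1P[<-|ab] cc dY c_le.
  by rewrite set_itv1 Rintegral_set1 subrr.
have ic : (@lebesgue_measure R).-integrable `[a, b] (EFin \o c).
  apply: continuous_compact_integrable; first exact: segment_compact.
  exact: continuous_subspaceT.
pose F s := \int[@lebesgue_measure R]_(x in `[a, s]) c x.
have dF x : x \in `]a, b[ -> derivable F x 1 /\ derive1 F x = c x.
  by rewrite in_itv /= => /andP[ax xb]; exact: continuous_FTC1_closed xb ic ax (cc x).
have YF_ndecr : (Y - F) a <= (Y - F) b.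
  apply: (@ger0_derive1_ndecr _ (Y - F) a b) => //; last exact: ltW.
  - by move=> x /dF[dFx _]; exact: derivableB.
  - move=> x /dF[dFx F'x].
    by rewrite derive1E deriveB // -!derive1E F'x subr_ge0.
  - have cY : {within `[a, b], continuous Y}.
      exact/continuous_subspaceT/derivable1_continuous.
    have cF := parameterized_integral_continuous (ltW ab) ic.
    by move=> x; exact: continuousB (cY x) (cF x).
move: YF_ndecr; rewrite !fctE /F set_itv1 Rintegral_set1 subr0.
lra.
Qed.

Lemma Rintegral_sum {R : realType} (d : measure_display) (T : measurableType d)
    (mu : {measure set T -> \bar R})
    (D : set T) (I : Type) (s : seq I) (f : I -> T -> R) :
  measurable D -> (forall i, mu.-integrable D (EFin \o f i)) ->
  \int[mu]_(x in D) (\sum_(i <- s) f i x) = \sum_(i <- s) \int[mu]_(x in D) f i x.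
Proof.
move=> mD intf; rewrite /Rintegral.
under eq_integral do rewrite -sumEFin.
rewrite integral_sum // sum_fine // => i _.
exact: integrable_fin_num (intf i).
Qed.

Section tanh.
Context {R : realType}.

Lemma continuous_tanh : continuous (@tanh R).
Proof.
move=> x; have cN : {for x, continuous (fun y : R => expR (- y))}.
  exact: continuous_comp (@oppr_continuous R R x) (@continuous_expR R _).
apply: cvgM; first by apply: cvgB; [exact: continuous_expR | exact: cN].
apply: cvgV; first by rewrite gt_eqF // addr_gt0 ?expR_gt0.
by apply: cvgD; [exact: continuous_expR | exact: cN].
Qed.

Lemma sgr_tanh (x : R) : Num.sg (tanh x) = Num.sg x.
Proof.
have den_gt0 : 0 < (expR x + expR (- x))^-1 by rewrite invr_gt0 addr_gt0 ?expR_gt0.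
rewrite /tanh sgrM (gtr0_sg den_gt0) mulr1.
have [x_lt0|x_gt0|->] := ltrgtP x 0.
- by rewrite !ltr0_sg // subr_lt0 ltr_expR; lra.
- by rewrite !gtr0_sg // subr_gt0 ltr_expR; lra.
- by rewrite oppr0 subrr.
Qed.

End tanh.

Section gain_inequalities.
Context {R : realDomainType}.

Lemma ler_mul_norm_bound {n th : R} (y : R) : `|n| <= th -> y * n <= th * `|y|.
Proof.
move=> n_le; rewrite mulrC (le_trans (ler_norm _)) // normrM.
by rewrite ler_wpM2r.
Qed.

Lemma sign_terms_dominate {l2 l3 th n dn : R} (u y : R) :
  0 <= l2 -> 0 <= l3 -> `|n| <= th -> l3 * `|n| + `|dn| <= l3 * th ->
  (l2 * u + l3 * y) * n - th * (l2 * `|u| + l3 * `|y|) <= y * dn.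
Proof.
move=> l2_ge0 l3_ge0 n_le gain.
have un_le := ler_wpM2l l2_ge0 (ler_mul_norm_bound u n_le).
have yn_le : l3 * (y * n) <= l3 * (`|y| * `|n|).
  by rewrite ler_wpM2l // -normrM ler_norm.
have ydn_ge : - (`|y| * `|dn|) <= y * dn.
  by rewrite -normrM lerNl -normrN ler_norm.
have gain_y := ler_wpM2l (normr_ge0 y) gain.
nra.
Qed.

End gain_inequalities.

Section coordinate_bound.
Context {R : realType}.
Notation mu := (@lebesgue_measure R).
Context {l2 l3 th : R} {e N : R -> R} {a b : R}.
Hypotheses (l2_ge0 : 0 <= l2) (l3_ge0 : 0 <= l3) (ab : a < b)
  (de : forall x, derivable e x 1) (ce' : continuous (derive1 e))
  (dN : forall x, derivable N x 1) (N_le : forall x, `|N x| <= th)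
  (gain : forall x, l3 * `|N x| + `|derive1 N x| <= l3 * th).

Let drift s := derive1 e s * N s + (l2 * tanh (e s) + l3 * e s) * N s
  - th * (l2 * `|tanh (e s)| + l3 * `|e s|).

Let integrand_eq s :
  (derive1 e s + l2 * tanh (e s) + l3 * e s) * (N s - th * Num.sg (e s))
  = drift s - th * (derive1 e s * Num.sg (e s)).
Proof. by rewrite /drift !normrEsg sgr_tanh; ring. Qed.

Let continuous_drift : continuous drift.
Proof.
have ce := derivable1_continuous de; have cN := derivable1_continuous dN.
have cte : continuous (fun s => tanh (e s)).
  by move=> x; exact: continuous_comp (ce x) (continuous_tanh _).
move=> x; rewrite /drift /prop_for /continuous_at.
apply: cvgB; first apply: cvgD.
- exact: cvgM (ce' x) (cN x).
- apply: cvgM (cN x); apply: cvgD.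
    exact: cvgM (cvg_cst _) (cte x).
  exact: cvgM (cvg_cst _) (ce x).
- apply: cvgM (cvg_cst _) _; apply: cvgD.
    exact: cvgM (cvg_cst _) (cvg_norm (cte x)).
  exact: cvgM (cvg_cst _) (cvg_norm (ce x)).
Qed.

Let integrable_drift : mu.-integrable `[a, b] (EFin \o drift).
Proof.
apply: continuous_compact_integrable; first exact: segment_compact.
exact: continuous_subspaceT.
Qed.

Let Rintegral_drift_le :
  \int[mu]_(x in `[a, b]) drift x <= e b * N b - e a * N a.
Proof.
apply: (@Rintegral_le_sub_of_le_derive _ _ (fun s => e s * N s)) => //.
- exact: ltW.
- by move=> x; apply: derivableM.
move=> x; rewrite derive1E deriveM // -!derive1E /GRing.scale /= /drift.
have := sign_terms_dominate (tanh (e x)) (e x) l2_ge0 l3_ge0 (N_le x) (gain x).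
lra.
Qed.

Let integrable_sign_term :
  mu.-integrable `[a, b] (EFin \o (fun s => th * (derive1 e s * Num.sg (e s)))).
Proof.
have -> : EFin \o (fun s => th * (derive1 e s * Num.sg (e s)))
    = (fun s => th%:E * (derive1 e s * Num.sg (e s))%R%:E)%E.
  by apply: funext => s; rewrite /= EFinM.
exact/integrableZl/integrable_derive_mul_sg.
Qed.

Lemma integrable_coordinate_integrand : mu.-integrable `[a, b]
  (EFin \o (fun s => (derive1 e s + l2 * tanh (e s) + l3 * e s)
                      * (N s - th * Num.sg (e s)))).
Proof.
rewrite (funext integrand_eq).
have -> : EFin \o (fun s => drift s - th * (derive1 e s * Num.sg (e s)))
    = ((EFin \o drift) \- (EFin \o (fun s => th * (derive1 e s * Num.sg (e s)))%R))%E.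
  by apply: funext => s; rewrite /= EFinB.
exact: integrableB.
Qed.

Lemma Rintegral_coordinate_integrand_le :
  \int[mu]_(x in `[a, b]) ((derive1 e x + l2 * tanh (e x) + l3 * e x)
                          * (N x - th * Num.sg (e x)))
  <= (th * `|e a| - e a * N a) - (th * `|e b| - e b * N b).
Proof.
under eq_Rintegral do rewrite integrand_eq.
rewrite RintegralB //.
rewrite RintegralZl // ?Rintegral_derive_mul_sg //; last exact: integrable_derive_mul_sg.
have := Rintegral_drift_le; lra.
Qed.

End coordinate_bound.

Theorem lemma1 (R : realType) (lam2 lam3 theta : 'I_nq -> R)
  (e2 Nd : 'I_nq -> R -> R) (t0 : R) :
  (forall i, 0 < lam2 i) -> (forall i, 0 < lam3 i) -> (forall i, 0 < theta i) ->
  (* e2 is continuously differentiable *)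
  (forall i t, derivable (e2 i) t 1) -> (forall i, continuous (derive1 (e2 i))) ->
  (* N_d is differentiable, and N_d and its derivative are bounded *)
  (forall i t, derivable (Nd i) t 1) ->
  (forall i, has_ubound (range (fun t : R => `|Nd i t|))) ->
  (forall i, has_ubound (range (fun t : R => `|derive1 (Nd i) t|))) ->
  (* gain condition *)
  (forall i, zeta_Nd1 Nd i + (lam3 i)^-1 * zeta_Nd2 Nd i < theta i) ->
  forall t, t0 <= t -> 0 <= P_fun lam2 lam3 theta e2 Nd t0 t.
Proof.
move=> lam2_gt0 lam3_gt0 _ de2 ce2' dNd Nd_bdd dNd_bdd gain t t0_le_t.
have Nd_le i s : `|Nd i s| <= zeta_Nd1 Nd i := ub_le_sup (Nd_bdd i) (imageT _ s).
have dNd_le i s : `|derive1 (Nd i) s| <= zeta_Nd2 Nd i :=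
  ub_le_sup (dNd_bdd i) (imageT _ s).
have gain_lam3 i s : lam3 i * `|Nd i s| + `|derive1 (Nd i) s| <= lam3 i * theta i.
  have := gain i; rewrite -(ltr_pM2l (lam3_gt0 i)) mulrDr mulrA mulfV ?gt_eqF // mul1r.
  have := ler_wpM2l (ltW (lam3_gt0 i)) (Nd_le i s); have := dNd_le i s; lra.
have Nd_le_theta i s : `|Nd i s| <= theta i.
  rewrite -(ler_pM2l (lam3_gt0 i)); have := gain_lam3 i s.
  have := normr_ge0 (derive1 (Nd i) s); lra.
move: t0_le_t; rewrite le_eqVlt => /predU1P[<-|t0_lt_t].
  rewrite /P_fun set_itv1 Rintegral_set1 subr0 /P_init -sumrB.
  by apply: sumr_ge0 => i _; rewrite subr_ge0 ler_mul_norm_bound.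
rewrite /P_fun /P_init /P_integrand /r_sig Rintegral_sum //; last first.
  by move=> i; apply: integrable_coordinate_integrand; rewrite ?ltW.
rewrite -!sumrB; apply: sumr_ge0 => i _.
have := Rintegral_coordinate_integrand_le (ltW (lam2_gt0 i)) (ltW (lam3_gt0 i))
  t0_lt_t (de2 i) (ce2' i) (dNd i) (Nd_le_theta i) (gain_lam3 i).
have := ler_mul_norm_bound (e2 i t) (Nd_le_theta i t).
lra.
Qed.
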